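(* Let $\Gamma$ be a vertex-transitive graph on $n$ vertices. Then $\Gamma$ has an induced subgraph $\Gamma'$ with at least $e(\Gamma)/2$ edges satisfying $\chi(\overline{\Gamma'})\le (\ln 4)\,n/\omega(\Gamma)$.
   Context: $\omega(\Gamma)$ is the clique number of $\Gamma$, $\overline{\Gamma'}$ is the complement of $\Gamma'$, and $\chi$ denotes chromatic number. *)

From mathcomp Require Import all_boot.
From mathcomp Require Import fingroup perm.
From Stdlib Require Import Reals.

Set Implicit Arguments.
Unset Strict Implicit.
Unset Printing Implicit Defensive.

Section Graphs.
Variable T : finType.

(* A finite simple graph on vertex type T is a symmetric irreflexive relation e. *)

Definition is_automorphism (e : rel T) (g : {perm T}) : Prop :=
  forall u v, e (g u) (g v) = e u v.

Definition vertex_transitive (e : rel T) : Prop :=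
  forall x y : T, exists g : {perm T}, is_automorphism e g /\ g x = y.

Definition num_edges (e : rel T) (S : {set T}) : nat :=
  #|[set A : {set T} | (A \subset S) &&
        [exists x, exists y, e x y && (A == [set x; y])]]|.

Definition compl (e : rel T) : rel T := fun x y => (x != y) && ~~ e x y.

Definition is_clique (e : rel T) (A : {set T}) : bool :=
  [forall x in A, forall y in A, (x != y) ==> e x y].

Definition omega (e : rel T) : nat := \max_(A : {set T} | is_clique e A) #|A|.

Definition colorable (adj : rel T) (V : {set T}) (k : nat) : bool :=
  [exists f : {ffun T -> 'I_k},
     [forall x in V, forall y in V, ((x != y) && adj x y) ==> (f x != f y)]].

Lemma colorable_card (adj : rel T) (V : {set T}) : exists k, colorable adj V k.
Proof.
exists #|T|; apply/existsP; exists [ffun x => enum_rank x].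
apply/forallP => x; apply/implyP => _; apply/forallP => y; apply/implyP => _.
apply/implyP => /andP [nxy _]; rewrite !ffunE.
by rewrite (inj_eq enum_rank_inj).
Qed.

Definition chi (adj : rel T) (V : {set T}) : nat :=
  ex_minn (colorable_card adj V).

End Graphs.

(* Fix a maximum clique K, so that |K| = omega, and t = floor (ln 4 * n / omega)
   automorphisms g_1, ..., g_t of the graph, and put S = g_1(K) u ... u g_t(K).
   Every g_i(K) is a clique, hence independent in the complement, so colouring v
   by some i with v in g_i(K) properly t-colours the complement of the graph
   induced on S.  It remains to choose the g_i so that S spans half of the edges,
   which follows by averaging over all t-tuples of automorphisms.  By
   transitivity a vertex misses a random image of K with probability
   x = 1 - omega / n, and an edge misses it with a probability whose mean over the
   edges is at least x^2, because every vertex outside K has a non-neighbour in K.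
   By the power mean inequality an edge lies in S with average probability at
   least 1 - 2 x^t + x^(2t) = (1 - x^t)^2, and the choice of t makes
   x^t < 1 - 1/sqrt 2; this uses omega <= n/2 when the graph is not complete
   (a vertex and a non-neighbour of it in K never lie in a common image of K). *)

From mathcomp Require Import all_boot fingroup perm action zify.
From Stdlib Require Import Reals Lra.
(* Reals rebinds [^] in [nat_scope] to [Nat.pow]; this restores [expn]. *)
From mathcomp Require Import ssrnat.

Set Implicit Arguments.
Unset Strict Implicit.
Unset Printing Implicit Defensive.

Lemma leq_expn2r (m n e : nat) : m <= n -> m ^ e <= n ^ e.
Proof. by move=> le_mn; elim: e => // e IHe; rewrite !expnS leq_mul. Qed.

Section RealBounds.
Local Open Scope R_scope.

Lemma INR_muln (m n : nat) : INR (m * n) = INR m * INR n.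
Proof. exact: mult_INR. Qed.

Lemma INR_expn (m n : nat) : INR (m ^ n) = INR m ^ n.
Proof. by elim: n => [|n IHn]; rewrite ?expn0 // expnS INR_muln IHn. Qed.

Lemma exp_INR_mul (x : R) (n : nat) : exp (INR n * x) = exp x ^ n.
Proof.
elim: n => [|n IHn]; first by rewrite Rmult_0_l exp_0.
by rewrite S_INR Rmult_plus_distr_r Rmult_1_l exp_plus IHn /= Rmult_comm.
Qed.

Lemma pow_le_exp (y : R) (n : nat) : -1 <= y -> (1 + y) ^ n <= exp (INR n * y).
Proof.
move=> y_ge; rewrite exp_INR_mul; apply: pow_incr.
have := exp_ineq1_le y; lra.
Qed.

Lemma ratio_lt_pow (a b c d : Z) (n : nat) : (0 < b)%Z -> (0 < d)%Z ->
  (c * b ^ Z.of_nat n < a ^ Z.of_nat n * d)%Z -> IZR c / IZR d < (IZR a / IZR b) ^ n.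
Proof.
move=> b_gt0 d_gt0 /IZR_lt; rewrite !mult_IZR /Rdiv Rpow_mult_distr pow_inv !pow_IZR.
have := IZR_lt _ _ d_gt0.
have := IZR_lt _ _ (Z.pow_pos_nonneg _ (Z.of_nat n) b_gt0 (Znat.Nat2Z.is_nonneg n)).
set B := IZR (b ^ _); set D := IZR d => B_gt0 D_gt0 lt_cd.
have BD_gt0 : 0 < D * B by apply: Rmult_lt_0_compat.
have -> : IZR c * / D = IZR c * B * / (D * B) by field; lra.
have -> : IZR (a ^ Z.of_nat n) * / B = IZR (a ^ Z.of_nat n) * D * / (D * B) by field; lra.
by apply: Rmult_lt_compat_r; [apply: Rinv_0_lt_compat|].
Qed.

Lemma ln4_gt : 138 / 100 < ln 4.
Proof.
have lt_exp : / 4 < exp (- (138 / 100)).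
  apply: (Rlt_le_trans _ ((1 + - (138 / 25600)) ^ 256)); last first.
    by rewrite (_ : - (138 / 100) = INR 256 * - (138 / 25600));
      [apply: pow_le_exp; lra | rewrite INR_IZR_INZ /=; lra].
  rewrite (_ : 1 + - (138 / 25600) = IZR 25462 / IZR 25600); last lra.
  rewrite (_ : / 4 = IZR 1 / IZR 4); last lra.
  by apply: ratio_lt_pow; vm_compute.
have ln_lt : ln (/ 4) < ln (exp (- (138 / 100))) by apply: ln_increasing; lra.
by rewrite ln_exp ln_Rinv in ln_lt; lra.
Qed.

Lemma ln4_lt : ln 4 < 142 / 100.
Proof.
have lt_exp : 4 < exp (142 / 100).
  apply: (Rlt_le_trans _ ((1 + 142 / 6400) ^ 64)); last first.
    by rewrite (_ : 142 / 100 = INR 64 * (142 / 6400));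
      [apply: pow_le_exp; lra | rewrite INR_IZR_INZ /=; lra].
  rewrite (_ : 1 + 142 / 6400 = IZR 6542 / IZR 6400); last lra.
  rewrite {1}(_ : 4 = IZR 4 / IZR 1); last lra.
  by apply: ratio_lt_pow; vm_compute.
by rewrite -[X in _ < X]ln_exp; apply: ln_increasing; lra.
Qed.

Lemma pow_one_sub_div_succ_le (t : nat) : (2 <= t <= 9)%N ->
  (1 - 138 / 100 / (INR t + 1)) ^ t <= 2928 / 10000.
Proof.
case/andP; case: t => [|[|[|[|[|[|[|[|[|[|t]]]]]]]]]] // _ _; rewrite !S_INR /=; lra.
Qed.

(* The constant is just below 1 - 1 / sqrt 2, the largest X with 2 (1 - X)^2 >= 1.
   Small t are checked numerically; for t >= 10 we have p <= ln 4 / 10 and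
   (1 - p) ^ t.+1 <= exp (- p * t.+1) < 1 / 4. *)
Lemma pow_one_sub_floor_ln4_le (p : R) (t : nat) : 0 < p <= 1 / 2 ->
  INR t <= ln 4 / p < INR t + 1 -> (1 - p) ^ t <= 2928 / 10000.
Proof.
move=> [p_gt0 p_le] [t_le t_gt]; have := ln4_gt; have := ln4_lt => ln4_hi ln4_lo.
have ln4_div : p * (ln 4 / p) = ln 4 by field; lra.
have pt_le : p * INR t <= ln 4 by rewrite -ln4_div; apply: Rmult_le_compat_l; lra.
have pt_gt : ln 4 < p * (INR t + 1) by rewrite -ln4_div; apply: Rmult_lt_compat_l.
have t_ge2 : (2 <= t)%N.
  by rewrite leqNgt; apply/negP; case: t {t_le t_gt pt_le} pt_gt => [|[|t]] //= pt_gt _; lra.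
have [t_le9 | t_gt9] := leqP t 9.
  apply: (Rle_trans _ ((1 - 138 / 100 / (INR t + 1)) ^ t)); last first.
    by apply: pow_one_sub_div_succ_le; rewrite t_ge2.
  apply: pow_incr; split; first lra.
  have t1_gt0 : 0 < INR t + 1 by have := pos_INR t; lra.
  suff : 138 / 100 / (INR t + 1) < p by lra.
  apply: (Rmult_lt_reg_l (INR t + 1)) => //.
  by rewrite (_ : _ * (_ / _) = 138 / 100); [lra | field; lra].
have t_ge10 : 10 <= INR t by rewrite (_ : 10 = INR 10); [apply/le_INR/leP | rewrite INR_IZR_INZ].
have p_small : p <= 142 / 1000 by nra.
have pow_lt : (1 - p) ^ t.+1 < / 4.
  apply: (Rle_lt_trans _ _ _ (@pow_le_exp (- p) t.+1 _)); first lra.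
  rewrite -[/ 4](exp_ln (/ 4)); last lra.
  by rewrite ln_Rinv; [apply: exp_increasing; rewrite S_INR; lra | lra].
have := pow_le (1 - p) t; rewrite /= in pow_lt; nra.
Qed.

Lemma floor_ln4_pow_bound (n w t : nat) : (0 < w)%N -> (2 * w <= n)%N \/ w = n ->
  INR t <= ln 4 * INR n / INR w < INR t + 1 ->
  ((n ^ t) ^ 2 <= 2 * (n ^ t - (n - w) ^ t) ^ 2)%N.
Proof.
move=> w_gt0 w_small [t_le t_gt].
have w_gt0R : 0 < INR w by apply/lt_0_INR/ltP.
have w_le : (w <= n)%N by case: w_small => [|<-//]; apply: leq_trans; rewrite leq_pmull.
have n_gt0R : 0 < INR n by apply/lt_0_INR/ltP/(leq_trans w_gt0).
suff le_2928 : INR ((n - w) ^ t) <= 2928 / 10000 * INR (n ^ t).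
  have sub_le := leq_expn2r t (leq_subr w n).
  apply/leP/INR_le; rewrite INR_muln !(@INR_expn _ 2) minus_INR /=; last exact/leP.
  have := pos_INR ((n - w) ^ t); nra.
rewrite !INR_expn minus_INR; last exact/leP.
case: w_small => [/leP/le_INR | w_eq]; last first.
  rewrite w_eq Rminus_diag pow_ne_zero; first by have := pow_le (INR n) t; lra.
  by case: t t_gt {t_le} => //=; rewrite w_eq /Rdiv Rmult_assoc Rinv_r; have := ln4_gt; lra.
rewrite INR_muln /= => wn_le.
have -> : (INR n - INR w) ^ t = (1 - INR w / INR n) ^ t * INR n ^ t.
  by rewrite -Rpow_mult_distr; congr (_ ^ _); field; lra.
apply: Rmult_le_compat_r; first exact/pow_le/Rlt_le.
apply: pow_one_sub_floor_ln4_le.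
  split; first exact: Rdiv_lt_0_compat.
  by apply: (Rmult_le_reg_r (INR n)) => //; rewrite /Rdiv Rmult_assoc Rinv_l; lra.
by rewrite (_ : ln 4 / (INR w / INR n) = ln 4 * INR n / INR w); last by field; lra.
Qed.

Lemma exists_nat_floor (r : R) : 0 <= r -> exists t : nat, INR t <= r < INR t + 1.
Proof.
move=> r_ge0; have [le_r gt_r] := base_Int_part r.
exists (BinInt.Z.to_nat (Int_part r)).
have : (-1 < Int_part r)%Z by apply: lt_IZR; lra.
by move=> ?; rewrite INR_IZR_INZ Znat.Z2Nat.id; [lra | lia].
Qed.

End RealBounds.

Lemma sum_nat_mem_card (I : finType) (A : {pred I}) (P : pred I) :
  \sum_(i in A) P i = #|[set i in A | P i]|.
Proof. by rewrite -sum1dep_card big_mkcondr; apply: eq_bigr => i _; case: (P i). Qed.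

Lemma exists_ge_mean (I : finType) (A : {pred I}) (a : I -> nat) (c : nat) :
  0 < #|A| -> #|A| * c <= \sum_(i in A) a i -> exists2 i, i \in A & c <= a i.
Proof.
move=> A_gt0 le_sum; apply/exists_inP; apply: contraLR le_sum => /exists_inPn lt_c.
rewrite -ltnNge -sum_nat_const.
have succ_le : \sum_(i in A) (a i).+1 <= \sum_(i in A) c.
  by apply: leq_sum => i /lt_c; rewrite -ltnNge.
apply: leq_trans succ_le.
have -> : \sum_(i in A) (a i).+1 = \sum_(i in A) a i + #|A|.
  by rewrite -sum1_card -big_split; apply: eq_bigr => i _; rewrite /= addn1.
by rewrite -addn1 leq_add2l.
Qed.

Lemma expn_rearrangement (a b t : nat) : a ^ t * b + b ^ t * a <= a ^ t.+1 + b ^ t.+1.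
Proof.
wlog le_ab : a b / a <= b.
  by move=> hyp; case: (leqP a b) => [|/ltnW] /hyp //; rewrite addnC [_ + b ^ _]addnC.
have := leq_expn2r t le_ab; rewrite !expnSr; nia.
Qed.

Lemma sum_expn_mul_le (I : finType) (P : pred I) (x : I -> nat) (t : nat) :
  (\sum_(i | P i) x i ^ t) * (\sum_(i | P i) x i) <=
  (\sum_(i | P i) 1) * \sum_(i | P i) x i ^ t.+1.
Proof.
rewrite -(leq_pmul2l (isT : 0 < 2)) !mul2n -!addnn !big_distrlr /=.
rewrite [X in _ + X <= _]exchange_big [X in _ <= _ + X]exchange_big /=.
rewrite -!big_split; apply: leq_sum => i _; rewrite -!big_split; apply: leq_sum => j _.
by rewrite /= !mul1n addnC expn_rearrangement.
Qed.

Lemma power_mean (I : finType) (P : pred I) (x : I -> nat) (t : nat) :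
  (\sum_(i | P i) 1) * (\sum_(i | P i) x i) ^ t <=
  (\sum_(i | P i) 1) ^ t * \sum_(i | P i) x i ^ t.
Proof.
elim: t => [|t IHt].
  by rewrite expn0 mul1n muln1; under [X in _ <= X]eq_bigr do rewrite expn0.
rewrite expnSr mulnA (leq_trans (leq_mul IHt (leqnn _))) // expnSr -!mulnA.
by rewrite leq_mul2l sum_expn_mul_le orbT.
Qed.

Lemma sum_pairs_rel (T : finType) (r : rel T) (F : T -> T -> nat) :
  \sum_(p | r p.1 p.2) F p.1 p.2 = \sum_u \sum_v r u v * F u v.
Proof.
rewrite -(pair_big_dep xpredT r) /=; apply: eq_bigr => u _; rewrite big_mkcond.
by apply: eq_bigr => v _; case: (r u v); rewrite ?mul1n.
Qed.

Lemma nat_mem_imset_perm (T : finType) (g : {perm T}) (K : {set T}) (u : T) :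
  (u \in g @: K) = \sum_(k in K) (g k == u) :> nat.
Proof.
have [/imsetP[k kK ->] | ugK] := boolP (u \in g @: K).
  rewrite (bigD1 k) //= eqxx big1 // => k' /andP[_ k'k].
  by rewrite (inj_eq perm_inj) (negbTE k'k).
by rewrite big1 // => k kK; apply/eqP; rewrite eqb0; apply: contraNN ugK => /eqP <-; apply: imset_f.
Qed.

Section Cliques.
Variables (T : finType) (e : rel T).

Lemma cliqueP (A : {set T}) :
  reflect {in A &, forall x y, x != y -> e x y} (is_clique e A).
Proof.
apply: (iffP forall_inP) => [cl x y xA yA | cl x xA].
  by move/forall_inP/(_ y yA)/implyP: (cl x xA).
by apply/forall_inP => y yA; apply/implyP; apply: cl.
Qed.

Lemma omega_max (A : {set T}) : is_clique e A -> #|A| <= omega e.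
Proof. exact: (@leq_bigmax_cond _ (is_clique e) (fun A => #|A|)). Qed.

Lemma exists_max_clique : exists2 K : {set T}, is_clique e K & #|K| = omega e.
Proof.
have /card_gt0P/(eq_bigmax_cond (fun A : {set T} => #|A|))[K] :
    exists A, A \in [pred A : {set T} | is_clique e A].
  by exists set0; apply/cliqueP => x; rewrite inE.
by exists K.
Qed.

Hypothesis e_sym : symmetric e.

Lemma max_clique_nonadj (K : {set T}) : is_clique e K ->
    (forall A, is_clique e A -> #|A| <= #|K|) ->
  forall u, u \notin K -> exists2 v, v \in K & ~~ e u v.
Proof.
move=> /cliqueP K_clique K_max u uK; apply/exists_inP; apply: contraT => /exists_inPn adj.
have : is_clique e (u |: K).
  apply/cliqueP => x y /setU1P[-> | xK] /setU1P[-> | yK]; rewrite ?eqxx // => xy.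
  - by have := adj y yK; rewrite negbK.
  - by rewrite e_sym; have := adj x xK; rewrite negbK.
  - exact: K_clique.
by move/K_max; rewrite cardsU1 uK ltnn.
Qed.

End Cliques.

Section Arcs.
Variables (T : finType) (e : rel T).

Definition arcs (X Y : {set T}) : nat :=
  \sum_u \sum_v [&& u \in X, v \in Y & e u v].

Lemma arcs_setC_r (X Y : {set T}) : arcs X [set: T] = arcs X Y + arcs X (~: Y).
Proof.
rewrite /arcs -big_split; apply: eq_bigr => u _; rewrite -big_split; apply: eq_bigr => v _.
by rewrite in_setT in_setC; case: (u \in X); case: (v \in Y); case: (e u v).
Qed.

Lemma arcs_regular (d : nat) (X : {set T}) :
  (forall u, \sum_v e u v = d) -> arcs X [set: T] = #|X| * d.
Proof.
move=> reg; rewrite /arcs -sum1_card big_distrl /= [RHS]big_mkcond /=; apply: eq_bigr => u _.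
case: (u \in X); last by rewrite big1.
by rewrite mul1n -(reg u); apply: eq_bigr => v _; rewrite in_setT.
Qed.

Hypothesis e_sym : symmetric e.

Lemma arcsC (X Y : {set T}) : arcs X Y = arcs Y X.
Proof.
rewrite /arcs exchange_big; apply: eq_bigr => u _; apply: eq_bigr => v _.
by rewrite e_sym andbCA.
Qed.

Hypothesis e_irr : irreflexive e.

Lemma arcs_clique (K : {set T}) : is_clique e K -> arcs K K = #|K| * (#|K| - 1).
Proof.
move/cliqueP => K_clique; rewrite /arcs -{1}sum1_card big_distrl /= [RHS]big_mkcond /=.
apply: eq_bigr => u _; case uK: (u \in K); last by rewrite big1.
rewrite mul1n (cardsD1 u K) uK add1n subn1 /= -sum1_card [RHS]big_mkcond /=.
apply: eq_bigr => v _; rewrite !inE.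
have [-> | vu] := eqVneq v u; first by rewrite e_irr andbF.
by case vK: (v \in K); rewrite //= K_clique // eq_sym.
Qed.

Lemma arcs_compl_max_clique (K : {set T}) : is_clique e K ->
    (forall A, is_clique e A -> #|A| <= #|K|) ->
  arcs (~: K) K <= #|~: K| * (#|K| - 1).
Proof.
move=> K_clique K_max; rewrite /arcs -sum1_card big_distrl /= [X in _ <= X]big_mkcond /=.
apply: leq_sum => u _; case: (boolP (u \in ~: K)) => [|_]; last by rewrite big1.
rewrite in_setC => /(max_clique_nonadj e_sym K_clique K_max)[v vK uv].
rewrite mul1n (cardsD1 v K) vK add1n subn1 /= -sum1_card (bigD1 v) //= vK (negbTE uv).
rewrite andbF add0n big_mkcond [X in _ <= X]big_mkcond /=; apply: leq_sum => x _.
by rewrite !inE; case: (x == v); case: (x \in K); case: (e u x).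
Qed.

Lemma regular_arcs_compl_max_clique (d : nat) (K : {set T}) :
    (forall u, \sum_v e u v = d) -> is_clique e K ->
    (forall A, is_clique e A -> #|A| <= #|K|) ->
  d * #|~: K| ^ 2 <= #|T| * arcs (~: K) (~: K).
Proof.
move=> reg K_clique K_max.
have out_arcs : arcs (~: K) (~: K) + arcs (~: K) K = #|~: K| * d.
  by rewrite -(arcs_regular _ reg) (arcs_setC_r _ (~: K)) setCK.
have in_arcs : #|K| * (#|K| - 1) + arcs (~: K) K = #|K| * d.
  by rewrite -(arcs_regular _ reg) (arcs_setC_r _ K) arcs_clique // arcsC.
have cut_le := arcs_compl_max_clique K_clique K_max.
rewrite -(cardsC K); nia.
Qed.

Lemma set2_eq_pair (a b x y : T) : a != b ->
  ([set a; b] == [set x; y]) = ((a, b) == (x, y)) || ((a, b) == (y, x)).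
Proof.
move=> a_neq_b; apply/idP/idP => [/eqP ab_xy | /orP[] /eqP[-> ->] //]; last by rewrite setUC.
move: a_neq_b.
have /set2P[] : a \in [set x; y] by rewrite -ab_xy set21.
all: have /set2P[] : b \in [set x; y] by rewrite -ab_xy set22.
all: by move=> -> ->; rewrite ?eqxx ?orbT.
Qed.

Lemma arcs_num_edges (S : {set T}) : arcs S S = 2 * num_edges e S.
Proof.
rewrite /arcs /num_edges pair_bigA /= mulnC; set E := [set A : {set T} | _].
have -> : \sum_p [&& p.1 \in S, p.2 \in S & e p.1 p.2] =
          \sum_(p | [&& p.1 \in S, p.2 \in S & e p.1 p.2]) 1 by rewrite [RHS]big_mkcond.
rewrite (partition_big (fun p => [set p.1; p.2]) (mem E)) /=; last first.
  move=> p /and3P[p1S p2S p12]; rewrite inE; apply/andP; split.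
    by apply/subsetP => z /set2P[] ->.
  by apply/existsP; exists p.1; apply/existsP; exists p.2; rewrite p12 eqxx.
rewrite -sum_nat_const; apply: eq_bigr => A /setIdP[sub_S /existsP[x /existsP[y]]].
case/andP=> xy /eqP A_eq; rewrite {A}A_eq in sub_S *.
have x_neq_y : x != y by apply: contraTneq xy => ->; rewrite e_irr.
have [xS yS] : x \in S /\ y \in S by split; apply: (subsetP sub_S); rewrite !inE eqxx ?orbT.
rewrite sum1dep_card (_ : [set p | _] = [set (x, y); (y, x)]).
  by rewrite cards2 xpair_eqE negb_and x_neq_y.
apply/setP => [[a b]]; rewrite !inE /=.
case: (boolP (e a b)) => [ab | nab]; last first.
  rewrite !andbF; apply/esym/negbTE; apply: contraNN nab => /orP[] /eqP[-> ->] //.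
  by rewrite e_sym.
have a_neq_b : a != b by apply: contraTneq ab => ->; rewrite e_irr.
rewrite andbT set2_eq_pair //.
by apply: andb_idl => /orP[] /eqP[-> ->]; rewrite xS yS.
Qed.

End Arcs.

Section Colouring.
Variables (T : finType) (e : rel T).

Lemma chi_le (adj : rel T) (V : {set T}) (k : nat) : colorable adj V k -> chi adj V <= k.
Proof. by rewrite /chi; case: ex_minnP => m _; apply. Qed.

Lemma chi_card0 (adj : rel T) (V : {set T}) : #|T| = 0 -> chi adj V = 0.
Proof.
move=> T0; apply/eqP; rewrite -leqn0; apply: chi_le; apply/existsP.
have /card_gt0P[f _] : 0 < #|{ffun T -> 'I_0}| by rewrite card_ffun T0.
by exists f; apply/forall_inP => x; case: (fintype0 x T0).
Qed.

(* The hypothesis [0 < t] cannot be dropped: with no colours even [set0] is not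
   colourable as soon as [T] is inhabited. *)
Lemma chi_compl_bigcup_cliques (t : nat) (C : 'I_t -> {set T}) : 0 < t ->
  (forall i, is_clique e (C i)) -> chi (compl e) (\bigcup_(i < t) C i) <= t.
Proof.
case: t C => // t C _ C_clique; apply: chi_le; apply/existsP.
exists [ffun x => odflt ord0 [pick i | x \in C i]].
apply/forall_inP => x /bigcupP[i _ xCi]; apply/forall_inP => y /bigcupP[j _ yCj].
apply/implyP => /andP[xy /andP[_ nexy]]; rewrite !ffunE.
case: pickP => [i' xCi' | /(_ i)]; last by rewrite xCi.
case: pickP => [j' yCj' | /(_ j)]; last by rewrite yCj.
apply: contraNneq nexy => /= ij; move/cliqueP: (C_clique i'); apply=> //.
by rewrite ij.
Qed.

End Colouring.

Section Automorphisms.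
Variables (T : finType) (e : rel T).

Definition graph_aut : {set {perm T}} :=
  [set g : {perm T} | [forall u, forall v, e (g u) (g v) == e u v]].

Lemma graph_autP (g : {perm T}) : reflect (is_automorphism e g) (g \in graph_aut).
Proof.
rewrite inE; apply: (iffP forallP) => [g_aut u v | g_aut u].
  exact/eqP/(forallP (g_aut u)).
by apply/forallP => v; rewrite g_aut.
Qed.

Lemma group_set_graph_aut : group_set graph_aut.
Proof.
apply/group_setP; split=> [|g h /graph_autP g_aut /graph_autP h_aut].
  by apply/graph_autP => u v; rewrite !perm1.
by apply/graph_autP => u v; rewrite !permM h_aut g_aut.
Qed.

Canonical graph_aut_group := Group group_set_graph_aut.

Lemma orbit_graph_aut (x : T) : vertex_transitive e -> orbit 'P graph_aut x = [set: T].
Proof.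
move=> vt; apply/setP => y; rewrite inE.
by have [g [/graph_autP g_aut <-]] := vt x y; exact: (mem_orbit 'P x g_aut).
Qed.

Lemma clique_aut_image (g : {perm T}) (K : {set T}) :
  g \in graph_aut -> is_clique e K -> is_clique e (g @: K).
Proof.
move=> /graph_autP g_aut /cliqueP K_clique; apply/cliqueP.
move=> _ _ /imsetP[x xK ->] /imsetP[y yK ->] gxy; rewrite g_aut K_clique //.
by apply: contraNneq gxy => ->.
Qed.

End Automorphisms.

Section TransitiveAutomorphismGroup.
Variables (T : finType) (e : rel T) (G : {group {perm T}}).
Hypotheses (G_aut : G \subset graph_aut e) (G_tr : forall x, orbit 'P G x = [set: T]).

Lemma card_amove (x y : T) : #|T| * #|amove 'P G x y| = #|G|.
Proof.
have /orbitP[a Ga <-] : y \in orbit 'P G x by rewrite G_tr inE.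
by rewrite amove_act ?subsetT // card_rcoset -(card_orbit_stab 'P G x) G_tr cardsT.
Qed.

Lemma card_image_cover (K : {set T}) (u : T) :
  #|T| * #|[set g in G | u \in g @: K]| = #|K| * #|G|.
Proof.
rewrite -sum_nat_mem_card; under eq_bigr do rewrite nat_mem_imset_perm.
rewrite exchange_big big_distrr /= -sum_nat_const; apply: eq_bigr => k _.
by rewrite sum_nat_mem_card; exact: card_amove.
Qed.

Lemma card_image_miss (K : {set T}) (u : T) :
  #|T| * #|[set g in G | u \notin g @: K]| = (#|T| - #|K|) * #|G|.
Proof.
have cover_miss : #|[set g in G | u \in g @: K]| + #|[set g in G | u \notin g @: K]| = #|G|.
  by rewrite -!sum_nat_mem_card -big_split -sum1_card; apply: eq_bigr => g _; case: (_ \in _).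
by rewrite mulnBl -(card_image_cover K u) -mulnBr -cover_miss addKn.
Qed.

Lemma transitive_regular (x y : T) : \sum_v e x v = \sum_v e y v.
Proof.
have /orbitP[g Gg <-] : y \in orbit 'P G x by rewrite G_tr inE.
have /graph_autP g_aut := subsetP G_aut g Gg.
by rewrite [RHS](reindex_inj (@perm_inj _ g)) /=; apply: eq_bigr => v _; rewrite g_aut.
Qed.

Lemma transitive_max_clique_half (K : {set T}) : symmetric e -> is_clique e K ->
    (forall A, is_clique e A -> #|A| <= #|K|) ->
  K != [set: T] -> 2 * #|K| <= #|T|.
Proof.
move=> e_sym K_clique K_max; rewrite -subTset => /subsetPn[u _ uK].
have [v vK uv] := max_clique_nonadj e_sym K_clique K_max uK.
have cover_le : #|[set g in G | u \in g @: K]| + #|[set g in G | v \in g @: K]| <= #|G|.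
  rewrite -!sum_nat_mem_card -big_split -sum1_card; apply: leq_sum => g Gg.
  case ugK: (u \in g @: K); case vgK: (v \in g @: K) => //=.
  have /cliqueP gK_clique := clique_aut_image (subsetP G_aut g Gg) K_clique.
  by rewrite gK_clique // in uv; apply: contraNneq uK => ->.
rewrite -(leq_pmul2r (cardG_gt0 G)) mul2n -addnn mulnDl.
rewrite -{1}(card_image_cover K u) -(card_image_cover K v) -mulnDr.
by rewrite leq_mul2l cover_le orbT.
Qed.

End TransitiveAutomorphismGroup.

Section RandomImages.
Variables (T : finType) (e : rel T) (G : {group {perm T}}) (K : {set T}) (t : nat).

Let U (f : {ffun 'I_t -> {perm T}}) := \bigcup_(i < t) f i @: K.
Let miss (u : T) := [set g in G | u \notin g @: K].
Let miss2 (u v : T) := [set g in G | (u \notin g @: K) && (v \notin g @: K)].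

(* Probabilities for a uniform random [f] in [G ^ t] become counts over
   [ffun_on G]: e.g. [u] lies outside [U f] for exactly [#|miss u| ^ t] of them. *)

Lemma sum_ffun_on_forall (P : pred {perm T}) :
  \sum_(f in ffun_on G) [forall i : 'I_t, P (f i)] = #|[set g in G | P g]| ^ t.
Proof.
rewrite sum_nat_mem_card -[t in RHS]card_ord -card_ffun_on; apply: eq_card => f.
rewrite !inE; apply/andP/ffun_onP => [[/ffun_onP fG /forallP fP] i | fGP].
  by rewrite inE fG fP.
by split; [apply/ffun_onP|apply/forallP] => i; have /setIdP[] := fGP i.
Qed.

Lemma notin_images_union (f : {ffun 'I_t -> {perm T}}) (u : T) :
  (u \notin U f) = [forall i, u \notin f i @: K].
Proof.
rewrite -negb_exists; congr (~~ _).
by apply/bigcupP/existsP => [[i _ uK] | [i uK]]; exists i.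
Qed.

Lemma pair_images_count (u v : T) :
  \sum_(f in ffun_on G) ((u \in U f) && (v \in U f)) + #|miss u| ^ t + #|miss v| ^ t =
  #|G| ^ t + #|miss2 u v| ^ t.
Proof.
have -> : #|G| ^ t = \sum_(f : {ffun 'I_t -> _} | f \in ffun_on G) 1.
  by rewrite sum1_card card_ffun_on card_ord.
rewrite -!sum_ffun_on_forall -!big_split; apply: eq_bigr => f _ /=.
rewrite -!notin_images_union.
have -> : [forall i, (u \notin f i @: K) && (v \notin f i @: K)] = (u \notin U f) && (v \notin U f).
  rewrite !notin_images_union; apply/forallP/andP => [uv | [/forallP u_out /forallP v_out] i].
    by split; apply/forallP => i; case/andP: (uv i).
  by rewrite u_out v_out.
by case: (u \in U f); case: (v \in U f).
Qed.

Lemma sum_arcs_images (B : nat) : (forall u, #|miss u| = B) ->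
  \sum_(f in ffun_on G) arcs e (U f) (U f) + 2 * arcs e [set: T] [set: T] * B ^ t =
  arcs e [set: T] [set: T] * #|G| ^ t + \sum_u \sum_v e u v * #|miss2 u v| ^ t.
Proof.
move=> missB; rewrite /arcs exchange_big /=; under eq_bigr do rewrite exchange_big /=.
rewrite (mulnC 2) -mulnA !big_distrl /= -!big_split /=; apply: eq_bigr => u _.
rewrite !big_distrl /= -!big_split /=; apply: eq_bigr => v _; rewrite !in_setT /=.
case: (e u v); last by rewrite big1 // => f _; rewrite !andbF.
under eq_bigr do rewrite andbT.
by rewrite /= !mul1n -(pair_images_count u v) !missB -addnA addnn -mul2n.
Qed.

Hypothesis G_aut : G \subset graph_aut e.

Lemma sum_miss2 : \sum_u \sum_v e u v * #|miss2 u v| = #|G| * arcs e (~: K) (~: K).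
Proof.
have -> : \sum_u \sum_v e u v * #|miss2 u v| =
          \sum_u \sum_v \sum_(g in G) [&& u \notin g @: K, v \notin g @: K & e u v].
  apply: eq_bigr => u _; apply: eq_bigr => v _; rewrite -sum_nat_mem_card big_distrr /=.
  by apply: eq_bigr => g _; case: (e u v); rewrite ?mul1n ?andbT ?mul0n ?andbF.
under eq_bigr do rewrite exchange_big /=; rewrite exchange_big /=.
rewrite -sum_nat_const; apply: eq_bigr => g Gg; have /graph_autP g_aut := subsetP G_aut g Gg.
rewrite (reindex_inj (@perm_inj _ g)); apply: eq_bigr => u _.
rewrite (reindex_inj (@perm_inj _ g)); apply: eq_bigr => v _.
by rewrite !mem_imset; try exact: perm_inj; rewrite g_aut !in_setC.
Qed.

Hypotheses (e_sym : symmetric e) (e_irr : irreflexive e).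
Hypothesis G_tr : forall x, orbit 'P G x = [set: T].
Hypotheses (K_clique : is_clique e K) (K_max : forall A, is_clique e A -> #|A| <= #|K|).

Lemma sum_miss2_expn_ge :
  arcs e [set: T] [set: T] * #|G| ^ t * ((#|T| - #|K|) ^ t) ^ 2 <=
  (#|T| ^ t) ^ 2 * \sum_u \sum_v e u v * #|miss2 u v| ^ t.
Proof.
set D := arcs e _ _; set J := \sum_u _; set n := #|T|; set Z := arcs e (~: K) (~: K).
have [n0 | /card_gt0P[x0 _]] := posnP n.
  by rewrite /D /arcs big1 ?mul0n // => u; case: (fintype0 u n0).
have reg u : \sum_v e u v = \sum_v e x0 v by exact: (transitive_regular G_aut G_tr).
have Z_ge : D * (n - #|K|) ^ 2 <= n ^ 2 * Z.
  have := regular_arcs_compl_max_clique e_sym e_irr reg K_clique K_max.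
  rewrite /D (arcs_regular _ reg) cardsT -[#|~: K|](addKn #|K|) cardsC => le_Z.
  by rewrite -mulnn -!mulnA leq_mul2l le_Z orbT.
have jensen : D * (#|G| * Z) ^ t <= D ^ t * J.
  have := power_mean (fun p : T * T => e p.1 p.2) (fun p => #|miss2 p.1 p.2|) t.
  rewrite (sum_pairs_rel e (fun _ _ => 1)) (sum_pairs_rel e (fun u v => #|miss2 u v|)).
  rewrite (sum_pairs_rel e (fun u v => #|miss2 u v| ^ t)) sum_miss2.
  suff -> : \sum_u \sum_v e u v * 1 = D by [].
  by apply: eq_bigr => u _; apply: eq_bigr => v _; rewrite !in_setT muln1.
have [-> | D_gt0] := posnP D; first by rewrite !mul0n.
rewrite -(leq_pmul2l (_ : 0 < D ^ t)) ?expn_gt0 ?D_gt0 //.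
have := leq_expn2r t Z_ge; rewrite (expnMn D) (expnMn (n ^ 2)) => Z_ge_t.
rewrite expnMn in jensen.
have := leq_mul (leqnn (D * #|G| ^ t)) Z_ge_t; have := leq_mul (leqnn ((n ^ 2) ^ t)) jensen.
rewrite -!expnM !(mulnC _ 2) !expnM; nia.
Qed.

Lemma exists_dense_images :
    (#|T| ^ t) ^ 2 <= 2 * (#|T| ^ t - (#|T| - #|K|) ^ t) ^ 2 ->
  exists2 f, f \in ffun_on G & arcs e [set: T] [set: T] <= 2 * arcs e (U f) (U f).
Proof.
move=> half; apply: exists_ge_mean; first by rewrite card_ffun_on expn_gt0 cardG_gt0.
rewrite card_ffun_on card_ord -big_distrr /= mulnC.
have [n0 | /card_gt0P[x0 _]] := posnP #|T|.
  by rewrite /arcs big1 ?mul0n // => u; case: (fintype0 u n0).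
have n_gt0 : 0 < #|T| by apply/card_gt0P; exists x0.
have missB u : #|miss u| = #|miss x0|.
  by apply/eqP; rewrite -(eqn_pmul2l n_gt0) !(card_image_miss G_tr).
have sumE := sum_arcs_images missB; have J_ge := sum_miss2_expn_ge.
have betaE : #|T| ^ t * #|miss x0| ^ t = (#|T| - #|K|) ^ t * #|G| ^ t.
  by rewrite -!expnMn (card_image_miss G_tr).
move: sumE betaE J_ge half; set S := \sum_(f in _) _; set J := \sum_u _.
set D := arcs e _ _; set a := #|T| ^ t; set b := (#|T| - #|K|) ^ t.
set M := #|G| ^ t; set beta := #|miss x0| ^ t => sumE betaE J_ge half.
have a_gt0 : 0 < a by rewrite expn_gt0 n_gt0.
have b_le : b <= a.
  rewrite leqNgt; apply: contraTN half => /ltnW; rewrite -subn_eq0 => /eqP ->.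
  by rewrite muln0 -ltnNge expn_gt0 a_gt0.
(* With X = b / a this says that the mean of [arcs e (U f) (U f)] is at least
   D (1 - X)^2 >= D / 2. *)
have key : a ^ 2 * S + 2 * a * b * (D * M) = a ^ 2 * (D * M) + a ^ 2 * J.
  by have := congr1 (muln (a ^ 2)) sumE; have := congr1 (muln (2 * a * D)) betaE; nia.
by rewrite -(leq_pmul2l (_ : 0 < a ^ 2)) ?expn_gt0 ?a_gt0 //; nia.
Qed.

End RandomImages.

Theorem lemma2p2 (T : finType) (e : rel T)
    (e_sym : symmetric e) (e_irr : irreflexive e)
    (e_vt : vertex_transitive e) :
  exists S : {set T},
    (num_edges e [set: T] <= 2 * num_edges e S)%N /\
    (INR (chi (compl e) S) <= ln 4 * INR #|T| / INR (omega e))%R.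
Proof.
have [T0 | /card_gt0P[x _]] := posnP #|T|.
  exists [set: T]; split; first by rewrite leq_pmull.
  by rewrite chi_card0 // T0 /= Rmult_0_r /Rdiv Rmult_0_l; lra.
have [K K_clique K_omega] := exists_max_clique e.
have K_max A : is_clique e A -> #|A| <= #|K| by rewrite K_omega; apply: omega_max.
have w_gt0 : 0 < #|K|.
  have x_clique : is_clique e [set x] by apply/cliqueP => ? ? /set1P-> /set1P->; rewrite eqxx.
  by have := K_max _ x_clique; rewrite cards1.
have G_tr y : orbit 'P (graph_aut e) y = [set: T] := orbit_graph_aut y e_vt.
have w_small : 2 * #|K| <= #|T| \/ #|K| = #|T|.
  have [->|K_proper] := eqVneq K [set: T]; [right; exact: cardsT | left].
  exact: (transitive_max_clique_half (subxx _) G_tr e_sym K_clique K_max).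
have [t t_floor] : exists t : nat, (INR t <= ln 4 * INR #|T| / INR #|K| < INR t + 1)%R.
  apply: exists_nat_floor; apply: Rmult_le_pos; last exact/Rlt_le/Rinv_0_lt_compat/lt_0_INR/ltP.
  by apply: Rmult_le_pos; [have := ln4_gt; lra | exact: pos_INR].
have half := floor_ln4_pow_bound w_gt0 w_small t_floor.
have t_gt0 : 0 < t by case: t half {t_floor} => //; rewrite !expn0 subnn.
have [f /ffun_onP f_aut dense] :=
  exists_dense_images (subxx _) e_sym e_irr G_tr K_clique K_max half.
exists (\bigcup_(i < t) f i @: K); split.
  by rewrite -(leq_pmul2l (isT : 0 < 2)) -!arcs_num_edges.
rewrite -K_omega; apply: Rle_trans (proj1 t_floor); apply/le_INR/leP.
by apply: chi_compl_bigcup_cliques => // i; apply: clique_aut_image.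
Qed.
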